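(* Let $\rho$ be a growth function, $m\ge1$ and $0\le k\le m$ integers, and $\sigma\in\{-1,1\}^m$ with $|\sigma|=k$. Define $\theta\in\{-1,1\}^m$ by $\theta_i=1$ for $1\le i\le k$ and $\theta_i=-1$ for $k+1\le i\le m$. If $f^\rho_\sigma=(a_\sigma,b_\sigma)$ and $f^\rho_\theta=(a_\theta,b_\theta)$, then $a_\sigma\le a_\theta$ and $b_\sigma=b_\theta$.
   Context: A growth function is an increasing $\rho:\mathbb{R}\to\mathbb{R}^{\ge0}$. Binary strings are elements of $\{-1,1\}^m$ (the empty string $<>$ for $m=0$); $|\sigma|$ is the number of coordinates equal to $1$; $\sigma\wedge u$ denotes concatenation. $f^\rho_\sigma\in\mathbb{R}^2$ is defined recursively: $f^\rho_{<>}=(0,0)$, and if $f^\rho_\sigma=(a,b)$ then $f^\rho_{\sigma\wedge1}=(a+1,b+1)$ and $f^\rho_{\sigma\wedge-1}=(a+\rho(a+b),b-1)$. *)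

From Stdlib Require Import Reals List.
Import ListNotations.
Open Scope R_scope.

Definition growth_function (rho : R -> R) : Prop :=
  (forall x y, x <= y -> rho x <= rho y) /\ (forall x, 0 <= rho x).

(* Binary strings in {-1,1}^m are lists of length m over bool:
   true encodes the coordinate 1, false encodes -1. *)
Definition bstring := list bool.

Definition weight (s : bstring) : nat := count_occ Bool.bool_dec s true.

Definition fstep (rho : R -> R) (p : R * R) (u : bool) : R * R :=
  let '(a, b) := p in
  if u then (a + 1, b + 1) else (a + rho (a + b), b - 1).

Definition frho (rho : R -> R) (s : bstring) : R * R :=
  fold_left (fstep rho) s (0, 0).

Definition theta (m k : nat) : bstring := repeat true k ++ repeat false (m - k).

(* Moving a coordinate -1 one place to the right, past a coordinate 1,
   leaves b unchanged and can only increase a: the -1 step then adds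
   rho (a + b + 2) instead of rho (a + b).  Both step maps are monotone in a
   for fixed b, so such a swap keeps its advantage through all later steps;
   bubbling every -1 to the end turns sigma into theta. *)

From Stdlib Require Import Reals List Lra Lia.
Import ListNotations.
Open Scope R_scope.

Definition below (p q : R * R) : Prop := fst p <= fst q /\ snd p = snd q.

Lemma below_refl p : below p p.
Proof. split; lra. Qed.

Lemma below_trans p q r : below p q -> below q r -> below p r.
Proof. intros [Hpq Epq] [Hqr Eqr]; split; [lra | congruence]. Qed.

Definition run (rho : R -> R) (s : bstring) (p : R * R) : R * R :=
  fold_left (fstep rho) s p.

Lemma run_app rho s t p : run rho (s ++ t) p = run rho t (run rho s p).
Proof. apply fold_left_app. Qed.

Section Monotone.

Variable rho : R -> R.
Hypothesis rho_mono : forall x y, x <= y -> rho x <= rho y.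

Lemma fstep_below p q u : below p q -> below (fstep rho p u) (fstep rho q u).
Proof.
  destruct p as [a b], q as [a' b']; intros [Ha Eb]; simpl in *; subst b'.
  destruct u; split; simpl; try lra.
  pose proof (rho_mono (a + b) (a' + b)); lra.
Qed.

Lemma run_below s p q : below p q -> below (run rho s p) (run rho s q).
Proof.
  revert p q; induction s as [|u s IH]; intros p q Hpq; [exact Hpq|].
  apply IH, fstep_below, Hpq.
Qed.

Lemma run_swap_below p : below (run rho [false; true] p) (run rho [true; false] p).
Proof.
  destruct p as [a b]; split; simpl.
  - pose proof (rho_mono (a + b) (a + 1 + (b + 1))); lra.
  - ring.
Qed.

Lemma run_false_ones_below j p :
  below (run rho (false :: repeat true j) p) (run rho (repeat true j ++ [false]) p).
Proof.
  revert p; induction j as [|j IH]; intros p; [apply below_refl|].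
  change (false :: repeat true (S j)) with ([false; true] ++ repeat true j).
  rewrite run_app.
  eapply below_trans; [apply run_below, run_swap_below|].
  change [true; false] with ([true] ++ [false]).
  rewrite run_app; apply IH.
Qed.

Lemma run_false_theta_below n w p : (w <= n)%nat ->
  below (run rho (false :: theta n w) p) (run rho (theta (S n) w) p).
Proof.
  intros Hwn; unfold theta.
  replace (S n - w)%nat with (1 + (n - w))%nat by lia.
  rewrite repeat_app, app_comm_cons, app_assoc.
  rewrite (run_app _ (false :: _)), (run_app _ (_ ++ _) (repeat false (n - w))).
  apply run_below, run_false_ones_below.
Qed.

Lemma run_below_theta s p q : below p q ->
  below (run rho s p) (run rho (theta (length s) (weight s)) q).
Proof.
  revert p q; induction s as [|u s IH]; intros p q Hpq; [exact Hpq|].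
  destruct u.
  - exact (IH _ _ (fstep_below _ _ true Hpq)).
  - apply (below_trans _ (run rho (false :: theta (length s) (weight s)) q)).
    + exact (IH _ _ (fstep_below _ _ false Hpq)).
    + apply (run_false_theta_below (length s) (weight s)), count_occ_bound.
Qed.

End Monotone.

Theorem mainTheorem17 (rho : R -> R) (m k : nat) (sigma : bstring) :
  growth_function rho ->
  (1 <= m)%nat -> (k <= m)%nat ->
  length sigma = m -> weight sigma = k ->
  fst (frho rho sigma) <= fst (frho rho (theta m k)) /\
  snd (frho rho sigma) = snd (frho rho (theta m k)).
Proof.
  intros [rho_mono _] _ _ <- <-.
  exact (run_below_theta rho rho_mono sigma (0, 0) (0, 0) (below_refl _)).
Qed.
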